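(* Let $R\in\mathcal{M}$, let $Z_1\le\deg R$ be a non-negative integer and $F\mid R$ monic. Let $C,D\in\mathcal{S}_{\mathcal{M}}(X)$ with $\deg C,\deg D\le\frac1{10}\deg R$. Then $$\sum_{\substack{A,B\in\mathcal{M}\\ \deg AB=Z_1\\ AC\equiv BD \ (\mathrm{mod}\ F)\\ AC\ne BD\\ (AB,R)=1}}\frac{1}{|AB|^{1/2}} \ll \frac{q^{Z_1/2}(Z_1+1)|CD|}{|F|}.$$
   Context: $q$ prime power, $\mathcal{M}$ the monic polynomials of $\mathbb{F}_q[T]$, $|A|=q^{\deg A}$, $X$ a positive integer, $\mathcal{S}_{\mathcal{M}}(X)=\{A\in\mathcal{M}: P\mid A\Rightarrow\deg P\le X\}$ for monic irreducible $P$. *)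

From Stdlib Require Import Rdefinitions R_sqrt.
From HB Require Import structures.
From mathcomp Require Import all_boot all_order all_algebra all_field.
From mathcomp Require Import Rstruct.
Set Implicit Arguments. Unset Strict Implicit. Unset Printing Implicit Defensive.
Import Order.TTheory GRing.Theory Num.Theory.
Local Open Scope ring_scope.

(* Degree of a polynomial (deg 0 = 0; only applied to monic, hence nonzero, polys) *)
Definition pdeg (K : fieldType) (p : {poly K}) : nat := (size p).-1.

Definition pabs (K : finFieldType) (p : {poly K}) : R :=
  ((#|K|%:R : R) ^+ pdeg p).

Definition monic_deg (K : finFieldType) (d : nat) : seq {poly K} :=
  [seq 'X^d + \sum_(i < d) (tnth t i)%:P * 'X^i | t : d.-tuple K].

Definition monic_le (K : finFieldType) (n : nat) : seq {poly K} :=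
  flatten [seq monic_deg K d | d <- iota 0 n.+1].

Definition smooth (K : fieldType) (X : nat) (A : {poly K}) : Prop :=
  forall P : {poly K}, P \is monic -> irreducible_poly P -> P %| A -> (pdeg P <= X)%N.

From Stdlib Require Import Rdefinitions R_sqrt.
From HB Require Import structures.
From mathcomp Require Import all_boot all_order all_algebra all_field.
From mathcomp Require Import Rstruct zify ring.
Set Implicit Arguments. Unset Strict Implicit. Unset Printing Implicit Defensive.
Import Order.TTheory GRing.Theory Num.Theory.
Local Open Scope ring_scope.

(* Every summand equals q^(-Z1/2), so it suffices to count the pairs (A, B).
   For such a pair A C - B D = H F with H <> 0, hence deg F <= Z1 + deg C + deg D.
   The pair is recovered from deg A, from which of A C and B D has the larger
   degree, and from the factor on the smaller side together with H: if
   deg (B D) <= deg (A C), then B and A C = H F + B D determine A.  Packing B and H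
   into B + H X^(deg B + 1), of degree below Z1 + deg C + deg D + 2 - deg F, injects
   the pairs into a set of size 2 (Z1 + 1) q^(Z1 + deg C + deg D + 2 - deg F). *)

Section MonicEnumeration.
Variable K : finFieldType.

Lemma tuple_polyE d (t : d.-tuple K) :
  \sum_(i < d) (tnth t i)%:P * 'X^i = \poly_(i < d) t`_i.
Proof. by rewrite poly_def; apply: eq_bigr => i _; rewrite mul_polyC -tnth_nth. Qed.

Lemma mem_monic_deg d p : p \in monic_deg K d -> p \is monic /\ size p = d.+1.
Proof.
case/mapP => t _ ->; rewrite tuple_polyE.
have lt_low : (size (\poly_(i < d) t`_i)%R < size ('X^d : {poly K}))%N.
  by rewrite size_polyXn ltnS size_poly.
by rewrite monicE lead_coefDl // lead_coefXn size_polyDl // size_polyXn eqxx.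
Qed.

Lemma uniq_monic_deg d : uniq (monic_deg K d).
Proof.
rewrite map_inj_uniq ?enum_uniq // => t1 t2; rewrite !tuple_polyE => /polyP eq_t.
apply: eq_from_tnth => i; rewrite !(tnth_nth 0).
by have := eq_t i; rewrite !coefD coefXn (ltn_eqF (ltn_ord i)) !add0r !coef_poly ltn_ord.
Qed.

Lemma mem_monic_le n p : p \in monic_le K n -> p \is monic.
Proof. by case/flatten_mapP => d _ /mem_monic_deg[]. Qed.

Lemma uniq_monic_le n : uniq (monic_le K n).
Proof.
rewrite /monic_le; elim: (iota 0 n.+1) (iota_uniq 0 n.+1) => //= d s IHs /andP[s'd uniq_s].
rewrite cat_uniq uniq_monic_deg IHs // andbT; apply/hasPn => p.
case/flatten_mapP => e s_e /mem_monic_deg[_ size_p]; apply/negP => /mem_monic_deg[_].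
by rewrite size_p => -[eq_ed]; rewrite -eq_ed s_e in s'd.
Qed.

End MonicEnumeration.

Section Packing.
Variable R : nzSemiRingType.

Definition pack (p h : {poly R}) : {poly R} := p + h * 'X^(size p).

Lemma size_pack (p h : {poly R}) : (size (pack p h) <= size p + size h)%N.
Proof.
apply: leq_trans (size_polyD _ _) _; rewrite geq_max leq_addr.
by apply: leq_trans (size_polyMleq _ _) _; rewrite size_polyXn addnS addnC.
Qed.

Lemma pack_inj (p h p' h' : {poly R}) :
  size p = size p' -> pack p h = pack p' h' -> p = p' /\ h = h'.
Proof.
rewrite /pack => eq_size; rewrite -eq_size => eq_pack.
split.
  by have := congr1 (take_poly (size p)) eq_pack; rewrite !take_polyDMXn ?eq_size.
by have := congr1 (drop_poly (size p)) eq_pack; rewrite !drop_polyDMXn ?eq_size.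
Qed.

End Packing.

Lemma size_pdeg (K : fieldType) (p : {poly K}) : p != 0 -> size p = (pdeg p).+1.
Proof. exact: polySpred. Qed.

Lemma pdegM (K : fieldType) (p q : {poly K}) :
  p != 0 -> q != 0 -> pdeg (p * q) = (pdeg p + pdeg q)%N.
Proof. by move=> p_neq0 q_neq0; rewrite {1}/pdeg size_mul // !size_pdeg // addSn addnS. Qed.

Section CongruentPairs.
Variables (K : finFieldType) (Z1 : nat) (F C D : {poly K}).
Hypotheses (C_neq0 : C != 0) (D_neq0 : D != 0).

Definition congruent_pair (p : {poly K} * {poly K}) : bool :=
  [&& pdeg (p.1 * p.2) == Z1, F %| p.1 * C - p.2 * D & p.1 * C != p.2 * D].

Definition cofactor (p : {poly K} * {poly K}) : {poly K} := (p.1 * C - p.2 * D) %/ F.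

Definition larger_left (p : {poly K} * {poly K}) : bool :=
  (size (p.2 * D)%R <= size (p.1 * C)%R)%N.

Definition pack_pair (p : {poly K} * {poly K}) : {poly K} :=
  if larger_left p then pack p.2 (cofactor p) else pack p.1 (cofactor p).

Definition code_len : nat := (Z1 + pdeg C + pdeg D + 2 - pdeg F)%N.

Definition encode_pair (p : {poly K} * {poly K}) : 'I_Z1.+1 * bool * 'rV[K]_code_len :=
  (inord (pdeg p.1), larger_left p, poly_rV (pack_pair p)).

Lemma cofactorK p : congruent_pair p -> cofactor p * F = p.1 * C - p.2 * D.
Proof. by case/and3P=> _ F_dvd _; rewrite divpK. Qed.

Section NonzeroPair.
Variables A B : {poly K}.
Hypotheses (A_neq0 : A != 0) (B_neq0 : B != 0) (AB_congr : congruent_pair (A, B)).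

Lemma pdeg_congruent_pair : (pdeg A + pdeg B = Z1)%N.
Proof. by case/and3P: AB_congr => /eqP <- _ _; rewrite pdegM. Qed.

Lemma modulus_neq0 : F != 0.
Proof.
case/and3P: AB_congr => _ F_dvd; rewrite -subr_eq0; apply: contra_neq => F0.
by move: F_dvd; rewrite F0 dvd0p => /eqP.
Qed.

Lemma size_cofactor_le :
  (size F <= size (A * C - B * D)%R)%N /\
  (size (A * C - B * D)%R <= maxn (size (A * C)%R) (size (B * D)%R))%N.
Proof.
case/and3P: AB_congr => _ F_dvd; rewrite -subr_eq0 => diff_neq0.
split; first exact: dvdp_leq.
by rewrite -(size_polyN (B * D)) size_polyD.
Qed.

Lemma pdeg_modulus_le : (pdeg F <= Z1 + pdeg C + pdeg D)%N.
Proof.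
have [F_le diff_le] := size_cofactor_le; have := pdeg_congruent_pair.
move: F_le diff_le A_neq0 B_neq0 C_neq0 D_neq0.
rewrite /pdeg !size_mul // -!size_poly_gt0.
(* size_mul and dvdp_leq reach size through different structure instances, which
   lia would take for distinct atoms; set identifies them. *)
set a := size A; set b := size B; set c := size C; set d := size D.
set f := size F; set e := size (A * C - B * D); lia.
Qed.

Lemma size_pack_pair : (size (pack_pair (A, B)) <= code_len)%N.
Proof.
have [F_le diff_le] := size_cofactor_le.
have size_cof := size_divp (A * C - B * D) modulus_neq0.
have deg_AB := pdeg_congruent_pair.
rewrite /pack_pair /larger_left /code_len /=.
case: ifP => side; apply: leq_trans (size_pack _ _) _; rewrite /cofactor size_cof;
  move: deg_AB side F_le diff_le A_neq0 B_neq0 C_neq0 D_neq0 modulus_neq0;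
  rewrite /pdeg !size_mul // -!size_poly_gt0;
  set a := size A; set b := size B; set c := size C; set d := size D;
  set f := size F; set e := size (A * C - B * D); lia.
Qed.

End NonzeroPair.

Lemma congruent_pair_eq p p' : congruent_pair p -> congruent_pair p' ->
  cofactor p = cofactor p' -> p.1 = p'.1 \/ p.2 = p'.2 -> p = p'.
Proof.
case: p p' => [A B] [A' B'] /cofactorK congr_AB /cofactorK congr_AB' eq_cof.
have eq_diff : A * C - B * D = A' * C - B' * D by rewrite -congr_AB -congr_AB' eq_cof.
case=> /= ?; subst; move: eq_diff.
  by move/addrI/oppr_inj/(mulIf D_neq0) ->.
by move/addIr/(mulIf C_neq0) ->.
Qed.

Definition nonzero_congruent_pair (p : {poly K} * {poly K}) : bool :=
  [&& p.1 != 0, p.2 != 0 & congruent_pair p].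

Lemma encode_pair_inj : {in nonzero_congruent_pair &, injective encode_pair}.
Proof.
move=> [A B] [A' B'] /and3P[/= A_neq0 B_neq0 AB_congr] /and3P[/= A'_neq0 B'_neq0 AB'_congr].
have deg_AB := pdeg_congruent_pair A_neq0 B_neq0 AB_congr.
have deg_AB' := pdeg_congruent_pair A'_neq0 B'_neq0 AB'_congr.
have [degA_lt degA'_lt] : (pdeg A < Z1.+1)%N /\ (pdeg A' < Z1.+1)%N.
  by rewrite !ltnS -{1}deg_AB -deg_AB' !leq_addr.
case=> /(congr1 val); rewrite /= !inordK // => eq_degA eq_side eq_code.
have eq_sizeA : size A = size A' by rewrite !size_pdeg // eq_degA.
have eq_sizeB : size B = size B'.
  by apply/eqP; rewrite !size_pdeg // eqSS -(eqn_add2l (pdeg A)) {2}eq_degA deg_AB deg_AB'.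
have eq_pack : pack_pair (A, B) = pack_pair (A', B').
  by rewrite -[LHS](poly_rV_K (size_pack_pair _ _ _)) // eq_code poly_rV_K // size_pack_pair.
move: eq_pack; rewrite /pack_pair -eq_side; case: ifP => _.
  by move/(pack_inj eq_sizeB) => -[eqB eq_cof]; apply: congruent_pair_eq; auto.
by move/(pack_inj eq_sizeA) => -[eqA eq_cof]; apply: congruent_pair_eq; auto.
Qed.

Lemma count_congruent_pairs (s : seq ({poly K} * {poly K})) :
  uniq s -> {in s, forall p, (p.1 != 0) && (p.2 != 0)} ->
  (count congruent_pair s * #|K| ^ pdeg F <= 2 * Z1.+1 * #|K| ^ (Z1 + pdeg C + pdeg D + 2))%N.
Proof.
move=> uniq_s s_neq0; rewrite -size_filter; set t := filter congruent_pair s.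
have t_nz p : p \in t -> nonzero_congruent_pair p.
  by rewrite mem_filter => /andP[p_congr /s_neq0 /andP[p1_neq0 p2_neq0]]; apply/and3P.
case t_eq : t => [|[A B] t'] //; rewrite -t_eq.
have /and3P[A_neq0 B_neq0 AB_congr] : nonzero_congruent_pair (A, B).
  by apply: t_nz; rewrite t_eq mem_head.
have size_t : (size t <= 2 * Z1.+1 * #|K| ^ code_len)%N.
  have uniq_code : uniq (map encode_pair t).
    rewrite map_inj_in_uniq ?filter_uniq // => p p' /t_nz p_nz /t_nz p'_nz.
    exact: encode_pair_inj.
  rewrite -(size_map encode_pair) -(card_uniqP uniq_code); apply: leq_trans (max_card _) _.
  by rewrite !card_prod card_ord card_bool card_mx mul1n [(Z1.+1 * 2)%N]mulnC.
rewrite -(subnK (leq_trans (pdeg_modulus_le A_neq0 B_neq0 AB_congr) (leq_addr 2 _))).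
by rewrite -/code_len expnD mulnA leq_mul2r size_t orbT.
Qed.

End CongruentPairs.

Lemma sum_allpairs_cond_const (V : nmodType) (I J : Type) (r1 : seq I) (r2 : seq J)
    (P : I -> J -> bool) (x : V) :
  \sum_(i <- r1) \sum_(j <- r2 | P i j) x =
  x *+ count (fun p => P p.1 p.2) [seq (i, j) | i <- r1, j <- r2].
Proof.
rewrite -iter_addr_0 -big_const_seq [RHS]big_mkcond big_allpairs /=.
by apply: eq_bigr => i _; rewrite big_mkcond.
Qed.

Lemma uniq_monic_pairs (K : finFieldType) (n : nat) :
  uniq [seq (A, B) | A <- monic_le K n, B <- monic_le K n].
Proof. by rewrite allpairs_uniq ?uniq_monic_le // => -[? ?] [? ?] _ _ [-> ->]. Qed.

Lemma monic_pairs_neq0 (K : finFieldType) (n : nat) :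
  {in [seq (A, B) | A <- monic_le K n, B <- monic_le K n], forall p, (p.1 != 0) && (p.2 != 0)}.
Proof.
move=> p /allpairsP[[A B] [/mem_monic_le/monic_neq0 A_neq0 /mem_monic_le/monic_neq0 B_neq0 ->]].
exact/andP.
Qed.

Theorem lemma6p4 :
  forall K : finFieldType, exists c : R, 0 < c /\
  forall (X : nat) (Rp F C D : {poly K}) (Z1 : nat),
    (0 < X)%N ->
    Rp \is monic -> (Z1 <= pdeg Rp)%N ->
    F \is monic -> F %| Rp ->
    C \is monic -> smooth X C -> D \is monic -> smooth X D ->
    (10 * pdeg C <= pdeg Rp)%N -> (10 * pdeg D <= pdeg Rp)%N ->
    \sum_(A <- monic_le K Z1) \sum_(B <- monic_le K Z1
            | [&& pdeg (A * B) == Z1, F %| A * C - B * D,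
                  A * C != B * D & coprimep (A * B) Rp])
        (sqrt (pabs (A * B)))^-1
    <= c * (sqrt ((#|K|%:R : R) ^+ Z1) * (Z1.+1)%:R * pabs (C * D) / pabs F).
Proof.
move=> K; set q : R := #|K|%:R.
have q_gt0 : 0 < q by rewrite ltr0n; apply/card_gt0P; exists 0.
exists (2 * q ^+ 2); split; first by rewrite mulr_gt0 ?exprn_gt0.
move=> X Rp F C D Z1 _ _ _ _ _ /monic_neq0 C_neq0 _ /monic_neq0 D_neq0 _ _ _.
set s := sqrt (q ^+ Z1).
have s_gt0 : 0 < s by apply/RltP/sqrt_lt_R0/RltP; rewrite exprn_gt0.
have sqr_s : s * s = q ^+ Z1 by rewrite -RmultE sqrt_sqrt //; apply/RleP; rewrite exprn_ge0 ?ltW.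
have qF_neq0 : q ^+ pdeg F != 0 by rewrite expf_neq0 ?gt_eqF.
have count_le := count_congruent_pairs Z1 F C_neq0 D_neq0 (uniq_monic_pairs K Z1)
  (@monic_pairs_neq0 K Z1).
rewrite (eq_bigr (fun A => \sum_(B <- monic_le K Z1 | [&& pdeg (A * B) == Z1,
    F %| A * C - B * D, A * C != B * D & coprimep (A * B) Rp]) s^-1)); last first.
  by move=> A _; apply: eq_bigr => B /and4P[/eqP deg_AB _ _ _]; rewrite /pabs deg_AB.
rewrite sum_allpairs_cond_const -[_ *+ count _ _]mulr_natl.
have -> : 2 * q ^+ 2 * (s * Z1.+1%:R * pabs (C * D) / pabs F) =
    (2 * Z1.+1)%:R * q ^+ (Z1 + pdeg C + pdeg D + 2) / q ^+ pdeg F / s.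
  rewrite /pabs pdegM // -/q natrM !exprD -sqr_s; field.
  by rewrite qF_neq0 gt_eqF.
rewrite -[X in X * _ <= _](mulfK qF_neq0) !ler_pM2r ?invr_gt0 ?exprn_gt0 //.
rewrite /q -!natrX -!natrM ler_nat.
apply: leq_trans count_le; rewrite leq_mul2r; apply/orP; right.
by apply: sub_count => -[A B] /and4P[? ? ? _]; apply/and3P.
Qed.
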